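(* Let $\kappa:=\sup_{x\in X}\sqrt{K(x,x)}<\infty$ and $|V|_0:=\sup_{y\in Y}V(y,0)<\infty$. Assume that for every $y\in Y$ the function $V(y,\cdot)$ is differentiable with derivative $V'(y,\cdot)$ Lipschitz with constant $L>0$, and that $0<\eta_t\le(L\kappa^2)^{-1}$ for all $t$. Then for every $t\ge1$, $\|f_{t+1}\|_K\le\sqrt{2|V|_0\sum_{k=1}^t\eta_k}$. In particular, if $\eta_t=\eta_1t^{-\theta}$ with $\theta\in[0,1)$ and $0<\eta_1\le\min\{\frac{1-\theta}{2|V|_0},(L\kappa^2)^{-1}\}$, then $\|f_{t+1}\|_K\le t^{\frac{1-\theta}{2}}$ for every $t\ge1$.
   Context: Setting. $X$ is a separable metric space, $Y\subseteq\mathbb{R}$, and $V:\mathbb{R}\times\mathbb{R}\to[0,\infty)$ is a measurable loss, convex in its second argument. A sample $\mathbf{z}=\{(x_i,y_i)\}_{i=1}^m\subset X\times Y$ is given, and $\mathcal{E}_{\mathbf z}(f)=\frac1m\sum_{i=1}^m V(y_i,f(x_i))$ is the empirical risk. $K:X\times X\to\mathbb{R}$ is a reproducing kernel with reproducing kernel Hilbert space $(\mathcal{H}_K,\|\cdot\|_K)$, $K_x=K(x,\cdot)$. Given step sizes $\eta_t>0$, the iterates are $f_1=0$ and $f_{t+1}=f_t-\eta_t\frac1m\sum_{j=1}^m V'(y_j,f_t(x_j))K_{x_j}$, $t\ge1$ (here $V'$ is the derivative in the second argument). *)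

From Stdlib Require Import Reals Lra.
Open Scope R_scope.

Fixpoint sum_lt (n : nat) (a : nat -> R) : R :=
  match n with
  | O => 0
  | S k => sum_lt k a + a k
  end.

Definition is_reproducing_kernel {X : Type} (K : X -> X -> R) : Prop :=
  (forall u v, K u v = K v u) /\
  (forall (n : nat) (c : nat -> R) (p : nat -> X),
      0 <= sum_lt n (fun i => sum_lt n (fun j => c i * c j * K (p i) (p j)))).

(* The function f = sum_{j<m} a_j K_{x_j} of H_K, evaluated at z. *)
Definition kerEval {X : Type} (K : X -> X -> R) (x : nat -> X) (m : nat)
  (a : nat -> R) (z : X) : R :=
  sum_lt m (fun j => a j * K (x j) z).

Definition rkhs_norm {X : Type} (K : X -> X -> R) (x : nat -> X) (m : nat)
  (a : nat -> R) : R :=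
  sqrt (sum_lt m (fun i => sum_lt m (fun j => a i * a j * K (x i) (x j)))).

(* Coefficients of the gradient-descent iterates:
   gd_coef t = coefficients of f_{t+1} in the span of K_{x_0},...,K_{x_{m-1}}.
   f_1 = 0, f_{t+1} = f_t - eta_t (1/m) sum_j V'(y_j, f_t(x_j)) K_{x_j}. *)
Fixpoint gd_coef {X : Type} (K : X -> X -> R) (V' : R -> R -> R)
  (x : nat -> X) (y : nat -> R) (m : nat) (eta : nat -> R) (t : nat)
  : nat -> R :=
  match t with
  | O => fun _ => 0
  | S n =>
      let a := gd_coef K V' x y m eta n in
      fun j => a j - eta (S n) / INR m * V' (y j) (kerEval K x m a (x j))
  end.

From Stdlib Require Import Reals Lra Lia Psatz.
Open Scope R_scope.

(* With c = eta_t / m, w_j = V'(y_j, f_t(x_j)) and g = sum_j w_j K_{x_j},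
   ||f_{t+1}||^2 = ||f_t||^2 - 2c sum_j w_j f_t(x_j) + c^2 ||g||^2.  The tangent
   line of the convex V(y_j, .) at f_t(x_j), evaluated at 0, gives
   V(y_j, f_t(x_j)) - w_j f_t(x_j) <= |V|_0.  The descent lemma for the
   L-Lipschitz derivative, with |g(x_j)| <= kappa ||g|| and eta_t <= 1/(L kappa^2),
   shows that a gradient step lowers the nonnegative sum of losses by at least
   (c/2) ||g||^2, so c ||g||^2 is at most twice that sum.  Hence
   ||f_{t+1}||^2 <= ||f_t||^2 + 2 eta_t |V|_0, which telescopes; for
   eta_t = eta_1 t^(-theta) one compares sum k^(-theta) with the integral of
   z^(-theta). *)

Lemma sum_lt_ext n f g :
  (forall i, (i < n)%nat -> f i = g i) -> sum_lt n f = sum_lt n g.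
Proof.
  induction n as [|n IH]; intros Hfg; simpl; [reflexivity|].
  rewrite IH, Hfg; [reflexivity | lia | intros; apply Hfg; lia].
Qed.

Lemma sum_lt_le n f g :
  (forall i, (i < n)%nat -> f i <= g i) -> sum_lt n f <= sum_lt n g.
Proof.
  induction n as [|n IH]; intros Hfg; simpl; [lra|].
  apply Rplus_le_compat; [apply IH; intros; apply Hfg; lia | apply Hfg; lia].
Qed.

Lemma sum_lt_plus n f g :
  sum_lt n (fun i => f i + g i) = sum_lt n f + sum_lt n g.
Proof. induction n as [|n IH]; simpl; [ring|]. rewrite IH; ring. Qed.

Lemma sum_lt_scal n c f : sum_lt n (fun i => c * f i) = c * sum_lt n f.
Proof. induction n as [|n IH]; simpl; [ring|]. rewrite IH; ring. Qed.

Lemma sum_lt_const n c : sum_lt n (fun _ => c) = INR n * c.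
Proof. induction n as [|n IH]; simpl sum_lt; [simpl; ring|]. rewrite IH, S_INR; ring. Qed.

Lemma sum_lt_sub_scal n c f g :
  sum_lt n (fun i => f i - c * g i) = sum_lt n f - c * sum_lt n g.
Proof. induction n as [|n IH]; simpl; [ring|]. rewrite IH; ring. Qed.

Lemma sum_lt_swap n p (F : nat -> nat -> R) :
  sum_lt n (fun i => sum_lt p (F i)) = sum_lt p (fun j => sum_lt n (fun i => F i j)).
Proof.
  induction n as [|n IH]; simpl.
  - rewrite sum_lt_const; ring.
  - rewrite IH, <- sum_lt_plus; reflexivity.
Qed.

Lemma quadratic_nonneg_discr A B C :
  0 <= C -> (forall s, 0 <= A + 2 * s * B + s ^ 2 * C) -> B ^ 2 <= A * C.
Proof.
  intros HC Hq. destruct (Rle_lt_or_eq_dec 0 C HC) as [Cpos|C0].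
  - specialize (Hq (- B / C)).
    replace (A + 2 * (- B / C) * B + (- B / C) ^ 2 * C) with ((A * C - B ^ 2) / C)
      in Hq by (field; lra).
    apply Rmult_le_compat_r with (r := C) in Hq; [|lra].
    unfold Rdiv in Hq. rewrite Rmult_assoc, Rinv_l, Rmult_0_l in Hq by lra. lra.
  - subst C. destruct (Req_dec B 0) as [B0|B0].
    + specialize (Hq 0). subst B. nra.
    + specialize (Hq (- (A + 1) / (2 * B))).
      replace (A + 2 * (- (A + 1) / (2 * B)) * B + (- (A + 1) / (2 * B)) ^ 2 * 0)
        with (-1) in Hq by (field; lra). lra.
Qed.

Definition convex_fun (f : R -> R) : Prop :=
  forall u v l, 0 <= l <= 1 -> f (l * u + (1 - l) * v) <= l * f u + (1 - l) * f v.

Lemma derivable_pt_lim_secant f u l d eps :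
  derivable_pt_lim f u l -> d <> 0 -> 0 < eps ->
  exists r, 0 < r <= 1 /\ Rabs ((f (u + r * d) - f u) / (r * d) - l) < eps.
Proof.
  intros Hf Hd Heps. destruct (Hf eps Heps) as [del Hdel].
  assert (Hdpos : 0 < Rabs d) by (apply Rabs_pos_lt; exact Hd).
  pose proof (cond_pos del) as Hdel_pos.
  set (r := Rmin 1 (del / (2 * Rabs d))).
  assert (Hr : 0 < r <= 1).
  { split; [apply Rmin_pos; [lra | apply Rdiv_lt_0_compat; lra] | apply Rmin_l]. }
  exists r. split; [exact Hr|]. apply Hdel.
  - apply Rmult_integral_contrapositive; split; lra.
  - rewrite Rabs_mult, (Rabs_right r) by lra.
    apply Rle_lt_trans with (del / (2 * Rabs d) * Rabs d).
    + apply Rmult_le_compat_r; [lra | apply Rmin_r].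
    + replace (del / (2 * Rabs d) * Rabs d) with (del / 2) by (field; lra). lra.
Qed.

Lemma convex_tangent_le f u l v :
  convex_fun f -> derivable_pt_lim f u l -> f u + l * (v - u) <= f v.
Proof.
  intros Hconv Hf. destruct (Req_dec v u) as [->|Hvu]; [lra|].
  set (d := v - u). assert (Hd : d <> 0) by (unfold d; lra).
  apply Rnot_lt_le; intros Hlt.
  assert (Hdpos : 0 < Rabs d) by (apply Rabs_pos_lt; exact Hd).
  set (gap := l * d - (f v - f u)).
  destruct (derivable_pt_lim_secant f u l d (gap / Rabs d) Hf Hd)
    as [r [Hr Hq]]; [unfold gap, d in *; apply Rdiv_lt_0_compat; lra|].
  set (q := (f (u + r * d) - f u) / (r * d)) in Hq.
  assert (Hchord : d * q <= f v - f u).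
  { assert (Hstep : f (u + r * d) <= r * f v + (1 - r) * f u).
    { replace (u + r * d) with (r * v + (1 - r) * u) by (unfold d; ring).
      apply Hconv; lra. }
    assert (Hdq : r * (d * q) = f (u + r * d) - f u) by (unfold q; field; lra).
    apply Rmult_le_reg_l with r; lra. }
  assert (Hclose : Rabs (d * (q - l)) < gap).
  { rewrite Rabs_mult. replace gap with (Rabs d * (gap / Rabs d)) by (field; lra).
    apply Rmult_lt_compat_l; assumption. }
  pose proof (Rle_abs (- (d * (q - l)))) as Habs. rewrite Rabs_Ropp in Habs.
  unfold gap in Hclose. lra.
Qed.

Lemma le_at_of_deriv_sign g g' u :
  (forall c, derivable_pt_lim g c (g' c)) -> (forall c, g' c * (c - u) <= 0) ->
  forall v, g v <= g u.
Proof.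
  intros Hg Hsign v. destruct (Rtotal_order u v) as [Huv|[<-|Hvu]]; [| lra |].
  - destruct (MVT_cor2 g g' u v Huv (fun c _ => Hg c)) as [c [Hc Hcuv]].
    pose proof (Hsign c). nra.
  - destruct (MVT_cor2 g g' v u Hvu (fun c _ => Hg c)) as [c [Hc Hcuv]].
    pose proof (Hsign c). nra.
Qed.

Lemma lipschitz_descent f f' L u v :
  (forall w, derivable_pt_lim f w (f' w)) ->
  (forall w z, Rabs (f' w - f' z) <= L * Rabs (w - z)) ->
  f v <= f u + f' u * (v - u) + L / 2 * (v - u) ^ 2.
Proof.
  intros Hf HLip.
  set (g := fun w => f w - f' u * (w - u) - L / 2 * (w - u) ^ 2).
  set (g' := fun w => f' w - f' u - L * (w - u)).
  assert (Hg : forall c, derivable_pt_lim g c (g' c)).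
  { intro c. unfold g, g'.
    replace (f' c - f' u - L * (c - u))
      with (f' c - f' u * (1 - 0) - L / 2 * (INR 2 * (c - u) ^ pred 2 * (1 - 0)))
      by (simpl; field).
    apply derivable_pt_lim_minus; [apply derivable_pt_lim_minus|]; [apply Hf| |].
    - apply derivable_pt_lim_scal, derivable_pt_lim_minus;
        [apply derivable_pt_lim_id | apply derivable_pt_lim_const].
    - apply derivable_pt_lim_scal.
      apply (derivable_pt_lim_comp (fun w => w - u) (fun z => z ^ 2)).
      + apply derivable_pt_lim_minus;
          [apply derivable_pt_lim_id | apply derivable_pt_lim_const].
      + apply derivable_pt_lim_pow. }
  assert (Hsign : forall c, g' c * (c - u) <= 0).
  { intro c. unfold g'. pose proof (HLip c u) as Hc.
    pose proof (Rle_abs (f' c - f' u)). pose proof (Rle_abs (- (f' c - f' u))).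
    rewrite Rabs_Ropp in *.
    destruct (Rle_dec u c).
    - rewrite (Rabs_right (c - u)) in Hc by lra. nra.
    - rewrite (Rabs_left (c - u)) in Hc by lra. nra. }
  pose proof (le_at_of_deriv_sign g g' u Hg Hsign v) as Hgv.
  unfold g in Hgv. replace ((u - u) ^ 2) with 0 in Hgv by ring. lra.
Qed.

Definition rkhs_inner {X : Type} (K : X -> X -> R) (x : nat -> X) (m : nat)
  (a b : nat -> R) : R :=
  sum_lt m (fun i => sum_lt m (fun j => a i * b j * K (x i) (x j))).

Section KernelExpansions.

Variables (X : Type) (K : X -> X -> R) (x : nat -> X) (m : nat).

Lemma rkhs_inner_sub_scal_l a b c w :
  rkhs_inner K x m (fun i => a i - c * w i) b = rkhs_inner K x m a b - c * rkhs_inner K x m w b.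
Proof.
  unfold rkhs_inner. rewrite <- sum_lt_sub_scal. apply sum_lt_ext; intros i _.
  rewrite <- sum_lt_sub_scal. apply sum_lt_ext; intros; ring.
Qed.

Lemma rkhs_inner_sub_scal_r a b c w :
  rkhs_inner K x m a (fun j => b j - c * w j) = rkhs_inner K x m a b - c * rkhs_inner K x m a w.
Proof.
  unfold rkhs_inner. rewrite <- sum_lt_sub_scal. apply sum_lt_ext; intros i _.
  rewrite <- sum_lt_sub_scal. apply sum_lt_ext; intros; ring.
Qed.

Hypothesis K_sym : forall u v, K u v = K v u.

Lemma rkhs_inner_kerEval a b :
  rkhs_inner K x m a b = sum_lt m (fun i => a i * kerEval K x m b (x i)).
Proof.
  apply sum_lt_ext; intros i _. unfold kerEval. rewrite <- sum_lt_scal.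
  apply sum_lt_ext; intros j _. rewrite (K_sym (x i) (x j)). ring.
Qed.

Lemma rkhs_inner_sym a b : rkhs_inner K x m a b = rkhs_inner K x m b a.
Proof.
  unfold rkhs_inner. rewrite sum_lt_swap.
  apply sum_lt_ext; intros i _; apply sum_lt_ext; intros j _.
  rewrite (K_sym (x i) (x j)). ring.
Qed.

Lemma rkhs_inner_sub_scal_self a w c :
  rkhs_inner K x m (fun j => a j - c * w j) (fun j => a j - c * w j)
  = rkhs_inner K x m a a - 2 * c * sum_lt m (fun j => w j * kerEval K x m a (x j))
    + c ^ 2 * rkhs_inner K x m w w.
Proof.
  rewrite rkhs_inner_sub_scal_l, !rkhs_inner_sub_scal_r.
  rewrite (rkhs_inner_sym a w), <- rkhs_inner_kerEval. ring.
Qed.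

End KernelExpansions.

Section ReproducingKernel.

Variables (X : Type) (K : X -> X -> R).
Hypothesis HK : is_reproducing_kernel K.

Lemma rkhs_inner_self_ge0 x m a : 0 <= rkhs_inner K x m a a.
Proof. apply (proj2 HK). Qed.

Lemma kernel_diag_ge0 z : 0 <= K z z.
Proof. pose proof (proj2 HK 1%nat (fun _ => 1) (fun _ => z)) as H. simpl in H. lra. Qed.

(* Positive semidefiniteness on the m+1 points x_0, ..., x_{m-1}, z with
   coefficients w_0, ..., w_{m-1}, s gives a nonnegative quadratic in s. *)
Lemma kerEval_sq_le x m w z :
  kerEval K x m w z ^ 2 <= K z z * rkhs_inner K x m w w.
Proof.
  rewrite Rmult_comm. apply quadratic_nonneg_discr; [apply kernel_diag_ge0|].
  intro s. destruct HK as [Hsym Hpsd].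
  set (c := fun i => if Nat.ltb i m then w i else s).
  set (p := fun i => if Nat.ltb i m then x i else z).
  assert (Hc : forall i, (i < m)%nat -> c i = w i /\ p i = x i).
  { intros i Hi. unfold c, p. apply Nat.ltb_lt in Hi. rewrite Hi. split; reflexivity. }
  assert (Hcm : c m = s) by (unfold c; rewrite Nat.ltb_irrefl; reflexivity).
  assert (Hpm : p m = z) by (unfold p; rewrite Nat.ltb_irrefl; reflexivity).
  specialize (Hpsd (S m) c p). cbn [sum_lt] in Hpsd. rewrite Hcm, Hpm in Hpsd.
  rewrite sum_lt_plus in Hpsd.
  replace (sum_lt m (fun i => sum_lt m (fun j => c i * c j * K (p i) (p j))))
    with (rkhs_inner K x m w w) in Hpsd
    by (apply sum_lt_ext; intros i Hi; apply sum_lt_ext; intros j Hj;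
        destruct (Hc i Hi) as [-> ->]; destruct (Hc j Hj) as [-> ->]; reflexivity).
  replace (sum_lt m (fun i => c i * s * K (p i) z)) with (s * kerEval K x m w z) in Hpsd
    by (unfold kerEval; rewrite <- sum_lt_scal; apply sum_lt_ext; intros i Hi;
        destruct (Hc i Hi) as [-> ->]; ring).
  replace (sum_lt m (fun j => s * c j * K z (p j))) with (s * kerEval K x m w z) in Hpsd
    by (unfold kerEval; rewrite <- sum_lt_scal; apply sum_lt_ext; intros j Hj;
        destruct (Hc j Hj) as [-> ->]; rewrite (Hsym z (x j)); ring).
  lra.
Qed.

End ReproducingKernel.

Section GradientDescent.

Variables (X : Type) (K : X -> X -> R) (V V' : R -> R -> R).
Variables (x : nat -> X) (y : nat -> R) (m : nat) (L kappa V0 : R).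

Hypothesis HK : is_reproducing_kernel K.
Hypothesis Hm : (1 <= m)%nat.
Hypothesis HL : 0 <= L.
Hypothesis Hkappa : forall j, (j < m)%nat -> K (x j) (x j) <= kappa ^ 2.
Hypothesis HV_ge0 : forall j u, (j < m)%nat -> 0 <= V (y j) u.
Hypothesis HV0 : forall j, (j < m)%nat -> V (y j) 0 <= V0.
Hypothesis HVconv : forall j, (j < m)%nat -> convex_fun (V (y j)).
Hypothesis HVder : forall j u, (j < m)%nat -> derivable_pt_lim (V (y j)) u (V' (y j) u).
Hypothesis HVlip : forall j u v, (j < m)%nat ->
  Rabs (V' (y j) u - V' (y j) v) <= L * Rabs (u - v).

Definition gd_grad (a : nat -> R) (j : nat) : R := V' (y j) (kerEval K x m a (x j)).

Definition sum_risk (a : nat -> R) : R := sum_lt m (fun j => V (y j) (kerEval K x m a (x j))).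

Lemma sum_risk_sub_grad_le a :
  sum_risk a - sum_lt m (fun j => gd_grad a j * kerEval K x m a (x j)) <= INR m * V0.
Proof.
  rewrite <- sum_lt_const. unfold sum_risk.
  rewrite <- (Rmult_1_l (sum_lt m (fun j => gd_grad a j * _))), <- sum_lt_sub_scal.
  apply sum_lt_le; intros j Hj.
  pose proof (convex_tangent_le _ _ _ 0 (HVconv j Hj) (HVder j (kerEval K x m a (x j)) Hj)).
  pose proof (HV0 j Hj). unfold gd_grad. lra.
Qed.

Lemma grad_sqnorm_le_sum_risk a c :
  0 < c -> L * kappa ^ 2 * (c * INR m) <= 1 ->
  c * rkhs_inner K x m (gd_grad a) (gd_grad a) <= 2 * sum_risk a.
Proof.
  intros Hc Hstep.
  set (w := gd_grad a). set (Qw := rkhs_inner K x m w w).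
  set (F := fun j => kerEval K x m a (x j)).
  set (G := fun j => kerEval K x m w (x j)).
  assert (HQw : 0 <= Qw) by apply rkhs_inner_self_ge0, HK.
  assert (HQwG : Qw = sum_lt m (fun j => w j * G j))
    by apply rkhs_inner_kerEval, (proj1 HK).
  assert (HG : sum_lt m (fun j => G j ^ 2) <= INR m * (kappa ^ 2 * Qw)).
  { rewrite <- sum_lt_const. apply sum_lt_le; intros j Hj.
    apply Rle_trans with (K (x j) (x j) * Qw); [apply kerEval_sq_le, HK|].
    apply Rmult_le_compat_r; auto. }
  assert (Hdescent : 0 <= sum_risk a - c * Qw + L / 2 * c ^ 2 * sum_lt m (fun j => G j ^ 2)).
  { apply Rle_trans with (sum_lt m (fun j => V (y j) (F j - c * G j))).
    { replace 0 with (sum_lt m (fun _ => 0)) by (rewrite sum_lt_const; ring).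
      apply sum_lt_le; intros j Hj; apply HV_ge0, Hj. }
    replace (sum_risk a - c * Qw + L / 2 * c ^ 2 * sum_lt m (fun j => G j ^ 2))
      with (sum_lt m (fun j => V (y j) (F j) - c * (w j * G j) + L / 2 * c ^ 2 * G j ^ 2))
      by (rewrite sum_lt_plus, sum_lt_sub_scal, sum_lt_scal, HQwG; reflexivity).
    apply sum_lt_le; intros j Hj.
    pose proof (lipschitz_descent _ _ L (F j) (F j - c * G j) (fun u => HVder j u Hj)
      (fun u v => HVlip j u v Hj)) as Hd.
    change (V' (y j) (F j)) with (w j) in Hd.
    eapply Rle_trans; [exact Hd | right; ring]. }
  assert (Hquad : L / 2 * c ^ 2 * sum_lt m (fun j => G j ^ 2) <= c * Qw / 2).
  { apply Rle_trans with (c * Qw / 2 * (L * kappa ^ 2 * (c * INR m))).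
    - replace (c * Qw / 2 * (L * kappa ^ 2 * (c * INR m)))
        with (L / 2 * c ^ 2 * (INR m * (kappa ^ 2 * Qw))) by (unfold Rdiv; ring).
      apply Rmult_le_compat_l; [nra | exact HG].
    - apply Rle_trans with (c * Qw / 2 * 1); [|lra].
      apply Rmult_le_compat_l; [unfold Rdiv; nra | exact Hstep]. }
  lra.
Qed.

Lemma gd_step_sqnorm_le eta a :
  0 < eta -> L * kappa ^ 2 * eta <= 1 ->
  rkhs_inner K x m (fun j => a j - eta / INR m * gd_grad a j)
                   (fun j => a j - eta / INR m * gd_grad a j)
  <= rkhs_inner K x m a a + 2 * eta * V0.
Proof.
  intros Heta HLeta.
  assert (Hmpos : 0 < INR m) by (apply lt_0_INR; lia).
  set (c := eta / INR m).
  assert (Hc : 0 < c) by (apply Rdiv_lt_0_compat; lra).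
  assert (Hcm : c * INR m = eta) by (unfold c; field; lra).
  rewrite rkhs_inner_sub_scal_self by apply (proj1 HK).
  pose proof (Rmult_le_compat_l c _ _ (Rlt_le _ _ Hc) (sum_risk_sub_grad_le a)).
  pose proof (Rmult_le_compat_l c _ _ (Rlt_le _ _ Hc)
    (grad_sqnorm_le_sum_risk a c Hc ltac:(rewrite Hcm; exact HLeta))).
  rewrite <- Hcm. lra.
Qed.

Lemma gd_coef_sqnorm_le eta :
  (forall t, (1 <= t)%nat -> 0 < eta t /\ L * kappa ^ 2 * eta t <= 1) ->
  forall t, rkhs_inner K x m (gd_coef K V' x y m eta t) (gd_coef K V' x y m eta t)
            <= 2 * V0 * sum_lt t (fun k => eta (S k)).
Proof.
  intros Heta t. induction t as [|t IH].
  - cbn [gd_coef sum_lt]. unfold rkhs_inner.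
    rewrite (sum_lt_ext _ _ (fun _ => 0)), sum_lt_const; [lra|].
    intros i _. rewrite (sum_lt_ext _ _ (fun _ => 0)), sum_lt_const; [ring|].
    intros; ring.
  - destruct (Heta (S t)) as [Het HLet]; [lia|].
    cbn [gd_coef sum_lt].
    eapply Rle_trans; [apply (gd_step_sqnorm_le (eta (S t))); assumption|]. lra.
Qed.

End GradientDescent.

Lemma Rpower_succ_ge th s :
  0 <= th < 1 -> 0 < s ->
  Rpower s (1 - th) + (1 - th) * Rpower (s + 1) (- th) <= Rpower (s + 1) (1 - th).
Proof.
  intros Hth Hs.
  destruct (MVT_cor2 (fun z => Rpower z (1 - th)) (fun z => (1 - th) * Rpower z (1 - th - 1))
              s (s + 1) ltac:(lra) (fun c Hc => derivable_pt_lim_power c (1 - th) ltac:(lra)))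
    as [c [Hmvt Hc]].
  replace (1 - th - 1) with (- th) in Hmvt by ring.
  assert (Hdecr : Rpower (s + 1) (- th) <= Rpower c (- th)).
  { rewrite !Rpower_Ropp. apply Rinv_le_contravar; [unfold Rpower; apply exp_pos|].
    apply Rle_Rpower_l; lra. }
  apply Rmult_le_compat_l with (r := 1 - th) in Hdecr; lra.
Qed.

Lemma sum_Rpower_le th t :
  0 <= th < 1 -> (1 <= t)%nat ->
  (1 - th) * sum_lt t (fun k => Rpower (INR (S k)) (- th)) <= Rpower (INR t) (1 - th).
Proof.
  intros Hth Ht. induction Ht as [|t Ht IH].
  - simpl. unfold Rpower. rewrite ln_1, !Rmult_0_r, exp_0. lra.
  - cbn [sum_lt]. rewrite S_INR.
    assert (Htpos : 0 < INR t) by (apply lt_0_INR; lia).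
    pose proof (Rpower_succ_ge th (INR t) Hth Htpos). lra.
Qed.

Lemma mult_le_1_of_le_inv c e : 0 <= c -> e <= / c -> c * e <= 1.
Proof.
  intros Hc He. destruct (Rle_lt_or_eq_dec 0 c Hc) as [Cpos| <-]; [|lra].
  replace 1 with (c * / c) by (field; lra). apply Rmult_le_compat_l; lra.
Qed.

Lemma Rpower_neg_bounds th s :
  0 <= th -> 1 <= s -> 0 < Rpower s (- th) <= 1.
Proof.
  intros Hth Hs. split; [unfold Rpower; apply exp_pos|].
  rewrite <- (Rpower_O s) by lra. apply Rle_Rpower; lra.
Qed.

Lemma poly_schedule_sum_le eta1 th V0 (eta : nat -> R) t :
  0 <= th < 1 -> 2 * V0 * eta1 <= 1 - th ->
  (forall k, (1 <= k)%nat -> eta k = eta1 * Rpower (INR k) (- th)) ->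
  (1 <= t)%nat ->
  2 * V0 * sum_lt t (fun k => eta (S k)) <= Rpower (INR t) (1 - th).
Proof.
  intros Hth HV0 Heta Ht.
  set (S0 := sum_lt t (fun k => Rpower (INR (S k)) (- th))).
  assert (HS0 : 0 <= S0).
  { replace 0 with (sum_lt t (fun _ => 0)) by (rewrite sum_lt_const; ring).
    apply sum_lt_le; intros k _. left; unfold Rpower; apply exp_pos. }
  replace (sum_lt t (fun k => eta (S k))) with (eta1 * S0)
    by (unfold S0; rewrite <- sum_lt_scal; apply sum_lt_ext; intros k _; symmetry; apply Heta; lia).
  pose proof (sum_Rpower_le th t Hth Ht) as Hsum. fold S0 in Hsum.
  apply Rle_trans with ((1 - th) * S0); [|assumption].
  rewrite <- Rmult_assoc. apply Rmult_le_compat_r; assumption.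
Qed.

Theorem mainTheorem15
  (X : Type) (Y : R -> Prop) (K : X -> X -> R) (V V' : R -> R -> R)
  (m : nat) (x : nat -> X) (y : nat -> R) (L kappa V0 : R)
  (HK : is_reproducing_kernel K)
  (Hm : (1 <= m)%nat)
  (HyY : forall i, (i < m)%nat -> Y (y i))
  (HVnn : forall a b, 0 <= V a b)
  (HVconv : forall a u v l, 0 <= l <= 1 ->
      V a (l * u + (1 - l) * v) <= l * V a u + (1 - l) * V a v)
  (Hkappa : is_lub (fun r => exists z : X, r = sqrt (K z z)) kappa)
  (HV0 : is_lub (fun r => exists b, Y b /\ r = V b 0) V0)
  (Hder : forall b, Y b -> forall u, derivable_pt_lim (V b) u (V' b u))
  (HL : 0 < L)
  (HLip : forall b, Y b -> forall u v, Rabs (V' b u - V' b v) <= L * Rabs (u - v)) :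
  (forall eta : nat -> R,
      (forall t, (1 <= t)%nat -> 0 < eta t /\ eta t <= / (L * kappa ^ 2)) ->
      forall t, (1 <= t)%nat ->
        rkhs_norm K x m (gd_coef K V' x y m eta t)
          <= sqrt (2 * V0 * sum_lt t (fun k => eta (S k))))
  /\
  (forall (eta1 theta : R) (eta : nat -> R),
      0 <= theta < 1 ->
      0 < eta1 ->
      2 * V0 * eta1 <= 1 - theta ->
      eta1 <= / (L * kappa ^ 2) ->
      (forall t, (1 <= t)%nat -> eta t = eta1 * Rpower (INR t) (- theta)) ->
      forall t, (1 <= t)%nat ->
        rkhs_norm K x m (gd_coef K V' x y m eta t)
          <= Rpower (INR t) ((1 - theta) / 2)).
Proof.
  assert (HKdiag : forall z, K z z <= kappa ^ 2).
  { intro z. assert (sqrt (K z z) <= kappa) by (apply (proj1 Hkappa); exists z; reflexivity).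
    pose proof (sqrt_sqrt _ (kernel_diag_ge0 _ K HK z)). pose proof (sqrt_pos (K z z)). nra. }
  assert (Hnorm : forall eta : nat -> R,
      (forall t, (1 <= t)%nat -> 0 < eta t /\ eta t <= / (L * kappa ^ 2)) ->
      forall t, rkhs_norm K x m (gd_coef K V' x y m eta t)
                <= sqrt (2 * V0 * sum_lt t (fun k => eta (S k)))).
  { intros eta Heta t. apply sqrt_le_1_alt.
    apply (gd_coef_sqnorm_le X K V V' x y m L kappa V0); auto; try lra.
    - intros j Hj. apply (proj1 HV0). exists (y j). auto.
    - intros j _ u v l. apply HVconv.
    - intros k Hk. destruct (Heta k Hk).
      split; [assumption | apply mult_le_1_of_le_inv; [nra | assumption]]. }
  split; [intros eta Heta t _; apply Hnorm, Heta|].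
  intros eta1 th eta Hth Heta1 HV0eta1 HLeta1 Heta t Ht.
  eapply Rle_trans.
  - apply Hnorm. intros k Hk. rewrite Heta by exact Hk.
    pose proof (Rpower_neg_bounds th (INR k) (proj1 Hth) (le_INR 1 k Hk)). nra.
  - unfold Rdiv. rewrite <- Rpower_mult, Rpower_sqrt by (unfold Rpower; apply exp_pos).
    apply sqrt_le_1_alt, (poly_schedule_sum_le eta1); assumption.
Qed.
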